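(* Let $\mathbb{K}$ be a field of characteristic $0$. Suppose $H^*$ is a $2n$-dimensional Poincaré graded (commutative) algebra over $\mathbb{K}$ with $H^0=\mathbb{K}$, and $H^i$ is nontrivial only when $i$ is even and $0\le i\le 2n$. If the multiplication map $H^i\otimes H^j\to H^{i+j}$ is injective for all $i,j\le n$, then $H^*\cong\mathbb{K}[x]/(x^p)$ is a quotient of the polynomial ring in a single (homogeneous) variable.
   Context: A finite-dimensional graded commutative algebra $H$ is $m$-dimensional Poincaré if there exists $\alpha_H\in(H^m)^\vee$ such that $H^i\to(H^{m-i})^\vee$, $x\mapsto(y\mapsto\alpha_H(xy))$, is an isomorphism for all $i$. *)

From HB Require Import structures.
From mathcomp Require Import all_boot all_order all_algebra falgebra.
Set Implicit Arguments. Unset Strict Implicit. Unset Printing Implicit Defensive.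
Import GRing.Theory.
Local Open Scope ring_scope.

(* A graded K-algebra is modelled as a finite-dimensional K-algebra A
   (falgType K) together with a family of subspaces H i (the degree-i part). *)

Definition graded_by (K : fieldType) (A : falgType K)
    (H : nat -> {vspace A}) (m : nat) : Prop :=
  [/\ (\sum_(i < m.+1) H i)%VS = fullv,
      directv (\sum_(i < m.+1) H i),
      (forall i, (m < i)%N -> H i = 0%VS),
      (forall i j, (H i * H j <= H (i + j)%N)%VS) &
      (1 \in H 0)].

Definition graded_commutative (K : fieldType) (A : falgType K)
    (H : nat -> {vspace A}) : Prop :=
  forall i j (x y : A), x \in H i -> y \in H j ->
    x * y = (-1) ^+ (i * j) * (y * x).

(* m-dimensional Poincare: there is alpha in (H^m)^dual such that for all
   i <= m, x |-> (y |-> alpha (x y)) : H^i -> (H^(m-i))^dual is an isomorphism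
   (injective and surjective).  alpha is given as a functional on A; only its
   restriction to H^m is ever used. *)
Definition poincare (K : fieldType) (A : falgType K)
    (H : nat -> {vspace A}) (m : nat) : Prop :=
  exists alpha : 'Hom(A, K^o),
    forall i, (i <= m)%N ->
      (forall x, x \in H i ->
         (forall y, y \in H (m - i)%N -> alpha (x * y) = 0) -> x = 0)
      /\ (forall phi : 'Hom(subvs_of (H (m - i)%N), K^o),
            exists2 x, x \in H i &
              forall y : subvs_of (H (m - i)%N), alpha (x * vsval y) = phi y).

(* U (x) V is identified with coefficient matrices w.r.t. the basis
   (e_a (x) f_b) built from the bases e = vbasis U and f = vbasis V. *)
Definition mul_tensor_injective (K : fieldType) (A : falgType K)
    (U V : {vspace A}) : Prop :=
  forall M : 'M[K]_(\dim U, \dim V),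
    \sum_(a < \dim U) \sum_(b < \dim V)
        M a b *: (tnth (vbasis U) a * tnth (vbasis V) b) = 0 ->
    M = 0.

(* The degrees e with H^e <> 0 contain 0, are closed under sums of degrees
   <= n (tensor injectivity makes products of nonzero elements nonzero) and
   under e |-> 2n - e (Poincare duality); such a set of degrees consists of the
   multiples of some k up to 2n.  Every H^e is at most a line: for e <= n
   because H^e is commutative and injectivity of H^e (x) H^e -> H^2e forbids
   antisymmetric tensors, for e > n by duality with H^(2n-e).  A generator x
   of H^k therefore has nonzero powers up to x^N, N = 2n/k, which span all of
   H, while x^(N+1) lies in degree > 2n; so H = K[x]/(x^(N+1)). *)

From mathcomp Require Import all_boot all_order all_algebra falgebra.
From mathcomp Require Import zify.
Set Implicit Arguments. Unset Strict Implicit. Unset Printing Implicit Defensive.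
Import GRing.Theory.

Section SymmetricSupport.

Variables (n : nat) (P : pred nat).
Hypotheses (P0 : P 0) (P_le : forall e, P e -> e <= 2 * n)
  (P_add : forall a b, a <= n -> b <= n -> P a -> P b -> P (a + b))
  (P_refl : forall e, e <= 2 * n -> P e -> P (2 * n - e)).

Lemma support_sub c a : n <= c -> a <= n -> a <= c -> P c -> P a -> P (c - a).
Proof.
move=> nc an ac Pc Pa; have c_le := P_le Pc.
have Pc' : P (2 * n - c + a) by apply: P_add; rewrite ?P_refl //; lia.
by have := P_refl (P_le Pc') Pc'; congr P; lia.
Qed.

Lemma support_top : P (2 * n).
Proof. by rewrite -[2 * n]subn0 P_refl. Qed.

Section MinimalElement.

Variable k : nat.
Hypotheses (k_gt0 : 0 < k) (Pk : P k) (k_min : forall e, 0 < e < k -> ~~ P e).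

Lemma support_addMk e i : P e -> e + i * k <= n -> P (e + i * k).
Proof.
move=> Pe; elim: i => [|i IHi] le_n; first by rewrite addn0.
rewrite mulSn addnCA; apply: P_add; rewrite ?IHi //; lia.
Qed.

Lemma support_window_eq a b : P a -> P b -> a <= n -> b <= n ->
  n < a + k -> n < b + k -> a = b.
Proof.
wlog ab : a b / a <= b => [wlog_ab|] Pa Pb an bn nak nbk.
  by case: (leqP a b) => [|/ltnW] ?; [|apply/esym]; apply: wlog_ab.
case: (ltnP a b) => [lt_ab|]; last lia.
case: (ltnP n k) => [nk|kn].
  by move: (k_min (e := b)); rewrite Pb; lia.
have Pak : P (a + k) by exact: P_add.
by move: (k_min (e := a + k - b)); rewrite support_sub //; lia.
Qed.

Lemma dvdn_support_le e : e <= n -> P e -> k %| e.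
Proof.
(* the largest elements of e + kN and of kN below n both lie in (n - k, n] *)
move=> en Pe; pose g := e + (n - e) %/ k * k; pose J := 0 + n %/ k * k.
have /andP[g_le g_gt] : g <= n < g + k.
  by have := leq_trunc_div (n - e) k; have := ltn_ceil (n - e) k_gt0; rewrite mulSn; lia.
have /andP[J_le J_gt] : J <= n < J + k.
  by have := leq_trunc_div n k; have := ltn_ceil n k_gt0; rewrite mulSn; lia.
have gJ : g = J by apply: support_window_eq; rewrite ?support_addMk.
by rewrite -(dvdn_addl e (dvdn_mull ((n - e) %/ k) (dvdnn k))) -/g gJ dvdn_mull.
Qed.

Lemma dvdn_support e : P e -> k %| e.
Proof.
elim/ltn_ind: e => e IHe Pe.
case: (leqP e n) => [en|ne]; first exact: dvdn_support_le en Pe.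
case: (leqP k n) => [kn|nk].
  have Pek : P (e - k) by apply: support_sub => //; lia.
  by rewrite -(subnK (ltnW (leq_ltn_trans kn ne))) dvdn_add ?IHe //; lia.
have top f : n < f -> P f -> f = 2 * n.
  move=> nf Pf; have f_le := P_le Pf.
  by move: (k_min (e := 2 * n - f)); rewrite P_refl //; lia.
by rewrite (top e) // -(top k) ?dvdnn.
Qed.

Lemma supportE e : P e = (e <= 2 * n) && (k %| e).
Proof.
apply/idP/andP => [Pe|[e_le ke]]; first by rewrite P_le ?dvdn_support.
have P_mul j : j * k <= n -> P (j * k) by rewrite -[j * k]add0n; apply: support_addMk.
case: (leqP e n) => [en|ne]; first by move: ke en => /dvdnP[i ->]; apply: P_mul.
have /dvdnP[j nj] : k %| 2 * n - e by rewrite dvdn_sub ?(dvdn_support support_top).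
by rewrite -(subKn e_le) P_refl ?leq_subr // nj P_mul // -nj; lia.
Qed.

End MinimalElement.

Lemma support_multiples : exists2 k, 0 < k & forall e, P e = (e <= 2 * n) && (k %| e).
Proof.
case: (posnP n) => [n0|n_gt0].
  exists 1 => // e; rewrite dvd1n andbT n0.
  by apply/idP/idP => [/P_le|]; rewrite ?n0 // leqn0 => /eqP ->.
have ex_k : exists k, (0 < k) && P k.
  by exists (2 * n); rewrite support_top; lia.
case: (ex_minnP ex_k) => k /andP[k_gt0 Pk] k_min; exists k => // e.
apply: supportE => // f /andP[f_gt0 fk]; apply/negP => Pf.
by have := k_min f; rewrite f_gt0 Pf => /(_ isT); lia.
Qed.

End SymmetricSupport.

Local Open Scope ring_scope.

Lemma dimv_le1_vline (K : fieldType) (vT : vectType K) (U : {vspace vT}) v :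
  (\dim U <= 1)%N -> v \in U -> v != 0 -> U = <[v]>%VS.
Proof.
move=> dimU Uv v0; apply/eqP; rewrite eq_sym eqEdim dim_vline v0 dimU andbT.
by rewrite -memvE.
Qed.

Lemma exists_coord_vbasis_neq0 (K : fieldType) (vT : vectType K) (U : {vspace vT}) u :
  u \in U -> u != 0 -> exists a, coord (vbasis U) a u != 0.
Proof.
move=> Uu u0; apply/existsP; apply: contraNT u0 => /existsPn coord0.
rewrite [u](coord_vbasis Uu) big1 // => a _.
by move/negPn/eqP: (coord0 a) => ->; rewrite scale0r.
Qed.

Lemma sum_delta_mxZ (K : fieldType) (V : lmodType K) m p (i : 'I_m) (j : 'I_p)
    (F : 'I_m -> 'I_p -> V) :
  \sum_a \sum_b delta_mx i j a b *: F a b = F i j.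
Proof.
rewrite (bigD1 i) //= [X in _ + X]big1 => [|a /negbTE ai]; last first.
  by rewrite big1 // => b _; rewrite mxE ai scale0r.
rewrite addr0 (bigD1 j) //= [X in _ + X]big1 => [|b /negbTE bj].
  by rewrite mxE !eqxx scale1r addr0.
by rewrite mxE bj andbF scale0r.
Qed.

Section TensorInjective.

Variables (K : fieldType) (A : falgType K).

Lemma mul_tensor_inj_neq0 (U V : {vspace A}) u v :
  mul_tensor_injective U V -> u \in U -> v \in V -> u != 0 -> v != 0 -> u * v != 0.
Proof.
move=> inj_UV Uu Vv.
move=> /(exists_coord_vbasis_neq0 Uu)[a ua] /(exists_coord_vbasis_neq0 Vv)[b vb].
apply: contraNneq (mulf_neq0 ua vb) => uv0.
pose M := \matrix_(a, b) (coord (vbasis U) a u * coord (vbasis V) b v).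
suff /matrixP/(_ a b) : M = 0 by rewrite !mxE => ->.
apply: inj_UV; rewrite -[in RHS]uv0 [in RHS](coord_vbasis Uu) [in RHS](coord_vbasis Vv).
rewrite mulr_suml; apply: eq_bigr => i _; rewrite mulr_sumr; apply: eq_bigr => j _.
by rewrite mxE -scalerAl -scalerAr scalerA !(tnth_nth 0).
Qed.

Lemma mul_tensor_inj_dimv_le1 (U : {vspace A}) :
  (forall u v, u \in U -> v \in U -> u * v = v * u) ->
  mul_tensor_injective U U -> (\dim U <= 1)%N.
Proof.
(* e_0 (x) e_1 - e_1 (x) e_0 is a nonzero tensor killed by multiplication *)
move=> commU inj_U; rewrite leqNgt; apply/negP => dim_gt1.
pose i0 : 'I_(\dim U) := Ordinal (ltnW dim_gt1); pose i1 : 'I_(\dim U) := Ordinal dim_gt1.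
have /matrixP/(_ i0 i1)/eqP : delta_mx i0 i1 - delta_mx i1 i0 = 0 :> 'M[K]_(\dim U).
  have subE a b : (delta_mx i0 i1 - delta_mx i1 i0 : 'M[K]_(\dim U)) a b =
      delta_mx i0 i1 a b - delta_mx i1 i0 a b by rewrite !mxE.
  apply: inj_U; under eq_bigr do under eq_bigr do rewrite subE scalerBl.
  under eq_bigr do rewrite sumrB.
  by rewrite sumrB !sum_delta_mxZ commU ?subrr ?vbasis_mem ?mem_tnth.
by rewrite !mxE !eqxx /= subr0 oner_eq0.
Qed.

End TensorInjective.

Section Pairing.

Variables (K : fieldType) (A : falgType K) (alpha : 'Hom(A, K^o)).

Definition left_nondegenerate (U V : {vspace A}) :=
  forall x, x \in U -> (forall y, y \in V -> alpha (x * y) = 0) -> x = 0.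

Lemma nondegenerate_dimv_le U V : left_nondegenerate U V -> (\dim U <= \dim V)%N.
Proof.
(* the matrix of alpha on the two bases has full row rank *)
move=> nondeg; set eU := vbasis U; set eV := vbasis V.
pose G := \matrix_(a < \dim U, b < \dim V) alpha (eU`_a * eV`_b).
suff /eqP <- : row_free G by exact: rank_leq_col.
apply/inj_row_free => w wG0; apply/rowP => a; rewrite mxE.
have /freeP free_eU := basis_free (vbasisP U); apply: free_eU a.
apply: nondeg => [|y Vy].
  by apply: rpred_sum => i _; rewrite rpredZ // vbasis_mem ?mem_nth ?size_tuple.
rewrite (coord_vbasis Vy) mulr_sumr linear_sum big1 // => b _.
rewrite -scalerAr linearZ /= mulr_suml linear_sum /=.
suff -> : \sum_i alpha (w 0 i *: eU`_i * eV`_b) = (w *m G) 0 b.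
  by rewrite wG0 mxE scaler0.
by rewrite mxE; apply: eq_bigr => i _; rewrite mxE -scalerAl linearZ.
Qed.

Lemma nondegenerate_mul_neq0 U V u v :
  left_nondegenerate U V -> (\dim V <= 1)%N ->
  u \in U -> v \in V -> u != 0 -> v != 0 -> u * v != 0.
Proof.
move=> nondeg dimV Uu Vv u0 v0; apply: contra_neq u0 => uv0.
apply: nondeg => // y; rewrite (dimv_le1_vline dimV Vv v0) => /vlineP[c ->].
by rewrite -scalerAr uv0 scaler0 linear0.
Qed.

End Pairing.

Section NilpotentPowers.

Variables (K : fieldType) (A : falgType K) (x : A).

Definition powers m : m.-tuple A := [tuple x ^+ i | i < m].

Lemma nth_powers m (i : 'I_m) : (powers m)`_i = x ^+ i.
Proof. by rewrite -tnth_nth tnth_mktuple. Qed.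

Lemma horner_algZXn c i : horner_alg x (c *: 'X^i) = c *: x ^+ i.
Proof. by rewrite linearZ rmorphXn /= horner_algX mulr_algl. Qed.

Lemma span_powers_horner_alg m a :
  a \in <<powers m>>%VS -> exists q : {poly K}, a = horner_alg x q.
Proof.
move=> /coord_span ->; exists (\sum_(i < m) coord (powers m) i a *: 'X^i).
by rewrite linear_sum; apply: eq_bigr => i _; rewrite nth_powers -horner_algZXn.
Qed.

Variable N : nat.
Hypotheses (xN_neq0 : x ^+ N != 0) (xSN_eq0 : x ^+ N.+1 = 0).

Lemma nilpotent_expr_eq0 e : (N < e)%N -> x ^+ e = 0.
Proof. by move=> Ne; rewrite -(subnKC Ne) exprD xSN_eq0 mul0r. Qed.

Lemma free_nilpotent_powers : free (powers N.+1).
Proof.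
apply/freeP => c sum_c0.
suff c0 m (i : 'I_N.+1) : (i < m)%N -> c i = 0 by move=> i; apply: (c0 N.+1).
elim: m i => [//|m IHm] i; rewrite ltnS leq_eqVlt => /predU1P[im|/IHm//].
have : (\sum_j c j *: (powers N.+1)`_j) * x ^+ (N - i) = c i *: x ^+ N.
  rewrite mulr_suml (bigD1 i) //= big1 => [|j ji].
    by rewrite addr0 nth_powers -scalerAl -exprD subnKC // -ltnS.
  case: (ltnP j i) => [lt_ji|le_ij]; first by rewrite IHm ?scale0r ?mul0r // -im.
  rewrite nth_powers -scalerAl -exprD nilpotent_expr_eq0 ?scaler0 //.
  have lt_ij : (i < j)%N by rewrite ltn_neqAle le_ij andbT eq_sym.
  by have := ltn_ord i; lia.
by rewrite sum_c0 mul0r => /esym/eqP; rewrite scaler_eq0 (negbTE xN_neq0) orbF => /eqP.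
Qed.

Lemma horner_alg_take_poly q : horner_alg x q = horner_alg x (take_poly N.+1 q).
Proof.
rewrite -{1}(poly_take_drop N.+1 q) rmorphD rmorphM rmorphXn /= horner_algX.
by rewrite xSN_eq0 mulr0 addr0.
Qed.

Lemma horner_alg_nilpotent_eq0 q : horner_alg x q = 0 <-> ('X^(N.+1) %| q)%R.
Proof.
rewrite horner_alg_take_poly -(rwP (modp_eq0P _ _)).
rewrite -Pdiv.IdomainMonic.take_poly_modp; split=> [|->]; last exact: rmorph0.
rewrite /take_poly poly_def linear_sum /= => horner0.
have /freeP coef0 := free_nilpotent_powers.
rewrite big1 // => i _; rewrite (coef0 (fun i : 'I_N.+1 => q`_i)) ?scale0r //.
by apply: etrans horner0; apply: eq_bigr => j _; rewrite horner_algZXn nth_powers.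
Qed.

End NilpotentPowers.

Section PoincareGradedAlgebra.

Variables (K : fieldType) (A : falgType K) (n : nat) (H : nat -> {vspace A}).
Variable alpha : 'Hom(A, K^o).
Hypotheses (H_mul : forall i j, (H i * H j <= H (i + j))%VS)
  (H_gt : forall i, (2 * n < i)%N -> H i = 0%VS)
  (H_one : 1 \in H 0)
  (H_comm : graded_commutative H)
  (H_odd : forall i, odd i -> H i = 0%VS)
  (H_dual : forall i, (i <= 2 * n)%N -> left_nondegenerate alpha (H i) (H (2 * n - i)))
  (H_inj : forall i j, (i <= n)%N -> (j <= n)%N -> mul_tensor_injective (H i) (H j)).

Lemma memv_gradedM i j u v : u \in H i -> v \in H j -> u * v \in H (i + j).
Proof. by move=> Hu Hv; apply: subvP (H_mul i j) _ (memv_mul Hu Hv). Qed.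

Lemma dimv_graded_le1 e : (\dim (H e) <= 1)%N.
Proof.
have dim_low f : (f <= n)%N -> (\dim (H f) <= 1)%N.
  move=> fn; have [/H_odd -> | even_f] := boolP (odd f); first by rewrite dimv0.
  apply: mul_tensor_inj_dimv_le1 (H_inj fn fn) => u v Hu Hv.
  by rewrite (H_comm Hu Hv) -signr_odd oddM (negbTE even_f) expr0 mul1r.
case: (leqP e n) => [|ne]; first exact: dim_low.
case: (leqP e (2 * n)) => [e_le|/H_gt ->]; last by rewrite dimv0.
by apply: leq_trans (nondegenerate_dimv_le (H_dual e_le)) (dim_low _ _); lia.
Qed.

Lemma graded_zero_neq0 : H 0 != 0%VS.
Proof. by apply: contraTneq H_one => ->; rewrite memv0 oner_eq0. Qed.

Lemma graded_dual_neq0 e : (e <= 2 * n)%N -> H e != 0%VS -> H (2 * n - e) != 0%VS.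
Proof.
move=> e_le; apply: contra_neq => He'; apply/eqP; rewrite -vpick0; apply/eqP.
apply: (H_dual e_le) => [|y]; first exact: memv_pick.
by rewrite He' memv0 => /eqP ->; rewrite mulr0 linear0.
Qed.

Lemma graded_top_neq0 : H (2 * n) != 0%VS.
Proof. by rewrite -[(2 * n)%N]subn0 graded_dual_neq0 ?graded_zero_neq0. Qed.

Lemma graded_support :
  exists2 k, (0 < k)%N & forall e, (H e != 0%VS) = (e <= 2 * n)%N && (k %| e)%N.
Proof.
apply: (support_multiples (P := fun e => H e != 0%VS)) => [|e|a b an bn Ha Hb|].
- exact: graded_zero_neq0.
- by apply: contraNT; rewrite -ltnNge => /H_gt ->.
- have := memv_gradedM (memv_pick (H a)) (memv_pick (H b)).
  apply: contraTneq => ->; rewrite memv0.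
  by apply: mul_tensor_inj_neq0 (H_inj an bn) _ _ _ _; rewrite ?memv_pick ?vpick0.
- exact: graded_dual_neq0.
Qed.

Section Generator.

Variable k : nat.
Hypotheses (k_gt0 : (0 < k)%N)
  (H_neq0E : forall e, (H e != 0%VS) = (e <= 2 * n)%N && (k %| e)%N).

Let N := ((2 * n) %/ k)%N.
Let x := vpick (H k).

Lemma top_degreeE : (N * k = 2 * n)%N.
Proof.
by apply: divnK; move: (H_neq0E (2 * n)); rewrite graded_top_neq0 => /esym/andP[].
Qed.

Lemma memv_gen_expr j : x ^+ j \in H (j * k).
Proof.
elim: j => [|j IHj]; first by rewrite expr0 mul0n.
by rewrite exprSr mulSnr memv_gradedM ?memv_pick.
Qed.

Lemma gen_expr_eq0 j : (N < j)%N -> x ^+ j = 0.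
Proof.
move=> Nj; apply/eqP; rewrite -memv0 -(H_gt (i := j * k)) ?memv_gen_expr //.
by rewrite -top_degreeE ltn_pmul2r.
Qed.

Lemma gen_expr_neq0_uphalf j : (j <= uphalf N)%N -> x ^+ j != 0.
Proof.
have NkE := top_degreeE; have upE := uphalf_half N; have dblE := odd_double_half N.
elim: j => [|j IHj] jN; first by rewrite expr0 oner_neq0.
have x_neq0 : x != 0 by rewrite vpick0 H_neq0E dvdnn andbT -NkE leq_pmull //; lia.
rewrite exprSr; case: j => [|j] in IHj jN *; first by rewrite expr0 mul1r.
have two_j : (j.+1.*2.+1 <= N)%N by lia.
have := leq_mul2r k (j.+1.*2.+1) N; rewrite two_j orbT NkE => /esym two_jk.
apply: mul_tensor_inj_neq0 (H_inj _ _) (memv_gen_expr _) (memv_pick _) (IHj _) x_neq0.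
all: nia.
Qed.

Lemma gen_expr_neq0 j : (j <= N)%N -> x ^+ j != 0.
Proof.
move=> jN; suff xN : x ^+ N != 0.
  by apply: contraNneq xN => xj0; rewrite -(subnKC jN) exprD xj0 mul0r.
(* x^N = x^(N/2) * x^(N - N/2) is a product in complementary degrees *)
have NkE := top_degreeE; have upE := uphalf_half N; have dblE := odd_double_half N.
have splitN : (N./2 + uphalf N = N)%N by lia.
have e_le : (N./2 * k <= 2 * n)%N by rewrite -NkE -{2}splitN mulnDl leq_addr.
have deg : (uphalf N * k = 2 * n - N./2 * k)%N by rewrite -NkE -{2}splitN mulnDl addKn.
rewrite -{1}splitN exprD.
apply: nondegenerate_mul_neq0 (H_dual e_le) (dimv_graded_le1 _) (memv_gen_expr _) _ _ _.
- by rewrite -deg memv_gen_expr.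
- by apply: gen_expr_neq0_uphalf; lia.
- exact: gen_expr_neq0_uphalf.
Qed.

Lemma graded_sub_span_powers e : (H e <= <<powers x N.+1>>)%VS.
Proof.
have [->|He] := eqVneq (H e) 0%VS; first exact: sub0v.
move: (He); rewrite H_neq0E => /andP[e_le /dvdnP[j ej]].
have jN : (j < N.+1)%N by rewrite ltnS -(leq_pmul2r k_gt0) top_degreeE -ej.
rewrite ej (dimv_le1_vline (dimv_graded_le1 _) (memv_gen_expr j) (gen_expr_neq0 jN)).
by rewrite -memvE -(nth_powers x (Ordinal jN)) memv_span ?mem_nth ?size_tuple.
Qed.

End Generator.

Lemma graded_nilpotent_generator : exists d m (x : A),
  [/\ (0 < d)%N, x \in H d, x ^+ m != 0, x ^+ m.+1 = 0 &
      forall e, (H e <= <<powers x m.+1>>)%VS].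
Proof.
have [k k_gt0 H_neq0E] := graded_support.
exists k, ((2 * n) %/ k)%N, (vpick (H k)); split; first exact: k_gt0.
- exact: memv_pick.
- exact: gen_expr_neq0.
- exact: gen_expr_eq0.
- exact: graded_sub_span_powers.
Qed.

End PoincareGradedAlgebra.

Theorem lemma3p8 (K : fieldType) (A : falgType K) (n : nat)
    (H : nat -> {vspace A}) :
  [pchar K] =i pred0 ->
  graded_by H (2 * n) ->
  graded_commutative H ->
  poincare H (2 * n) ->
  H 0 = (<[1]>)%VS ->
  (forall i, odd i -> H i = 0%VS) ->
  (forall i j, (i <= n)%N -> (j <= n)%N -> mul_tensor_injective (H i) (H j)) ->
  exists (d p : nat) (x : A),
    [/\ (0 < d)%N, x \in H d,
        (forall a : A, exists q : {poly K}, a = (map_poly (in_alg A) q).[x]) &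
        (forall q : {poly K}, (map_poly (in_alg A) q).[x] = 0 <-> ('X^p %| q)%R)].
Proof.
move=> _ [H_sum _ H_gt H_mul H_one] H_comm [alpha H_poincare] _ H_odd H_inj.
have H_dual i (i_le : (i <= 2 * n)%N) := (H_poincare i i_le).1.
have [d [m [x [d_gt0 Hx xm_neq0 xSm_eq0 H_span]]]] :=
  graded_nilpotent_generator H_mul H_gt H_one H_comm H_odd H_dual H_inj.
exists d, m.+1, x; split => // [a|q]; last exact: horner_alg_nilpotent_eq0.
apply: span_powers_horner_alg; apply: subvP (memvf a).
by rewrite -H_sum; apply/subv_sumP => i _; exact: H_span.
Qed.
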